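(* Fix an attacker label $A\in\mathcal{L}$. For all labels $pc$, all partial bijections $\beta$, all initial configurations $c_1,c_2$ and environments $\theta_1,\theta_2$ of $\lambda^{dFG}$ extended with flow-sensitive references such that $\vdash\mathbf{Valid}(c_1,\theta_1)$, $\vdash\mathbf{Valid}(c_2,\theta_2)$, $c_1\approx^{\beta}_A c_2$ and $\theta_1\approx^{\beta}_A\theta_2$: if $c_1\Downarrow^{\theta_1}_{pc}c_1'$ and $c_2\Downarrow^{\theta_2}_{pc}c_2'$, then there exists a partial bijection $\beta'\supseteq\beta$ such that $c_1'\approx^{\beta'}_A c_2'$.
   Context: Fix a lattice $(\mathcal{L},\sqsubseteq,\sqcup)$ of labels. The calculus has types $\tau::=\mathbf{unit}\mid\tau_1\to\tau_2\mid\tau_1+\tau_2\mid\tau_1\times\tau_2\mid\mathcal{L}\mid\mathbf{Ref}\,s\,\tau$ with $s\in\{I,S\}$ (standard simple typing; terms are implicitly well-typed and the tag $s$ determines which reference rules apply), expressions $e::=x\mid\lambda x.e\mid e_1\,e_2\mid()\mid\ell\mid(e_1,e_2)\mid\mathbf{fst}(e)\mid\mathbf{snd}(e)\mid\mathbf{inl}(e)\mid\mathbf{inr}(e)\mid\mathbf{case}(e,x.e_1,x.e_2)\mid\mathbf{getLabel}\mid\mathbf{labelOf}(e)\mid e_1\sqsubseteq^{?}e_2\mid\mathbf{taint}(e_1,e_2)\mid\mathbf{new}(e)\mid\,!e\mid e_1:=e_2\mid\mathbf{labelOfRef}(e)$, raw values $r::=()\mid(x.e,\theta)\mid\mathbf{inl}(v)\mid\mathbf{inr}(v)\mid(v_1,v_2)\mid\ell\mid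 n_\ell\mid n$ ($n\in\mathbb N$; $n_\ell$ is a flow-insensitive reference to memory $\ell$, $n$ a flow-sensitive heap address), values $v::=r^{\ell}$, environments $\theta$ finite maps from variables to values; $v\sqcup\ell'$ denotes $r^{\ell\sqcup\ell'}$ for $v=r^\ell$. Memories are finite lists of raw values, a store $\Sigma$ maps each label to a memory, a heap $\mu$ is a finite list of values; for a list $X$, $|X|$ is its length, $X[n]$ its $n$-th entry (from $0$), $X[n\mapsto y]$ the list with entry $n$ replaced (appended if $n=|X|$). Evaluation $\langle\Sigma,\mu,e\rangle\Downarrow^\theta_{pc}\langle\Sigma',\mu',v\rangle$ is the least relation closed under the rules below; ''$e\Downarrow v$'' means evaluation with current $\theta,pc$, store and heap threaded through premises left to right, rules without premises leave them unchanged. (Var) $x\Downarrow\theta(x)\sqcup pc$. (Unit) $()\Downarrow()^{pc}$. (Label) $\ell\Downarrow\ell^{pc}$. (Fun) $\lambda x.e\Downarrow(x.e,\theta)^{pc}$. (GetLabel) $\mathbf{getLabel}\Downarrow pc^{pc}$. (App) if $e_1\Downarrow(x.e,\theta')^{\ell}$, $e_2\Downarrow v_2$, and $e$ evaluates to $v$ in $\theta'[x\mapsto v_2]$ with program counter $pc\sqcup\ell$, then $e_1\,e_2\Downarrow v$. (Inl/Inr) $\mathbf{inl}(e)\Downarrow\mathbf{inl}(v)^{pc}$ if $e\Downarrow v$, similarly $\mathbf{inr}$. (Case) if $e\Downarrow\mathbf{inl}(v_1)^\ell$ and $e_1$ evaluates to $v$ in $\theta[x\mapsto v_1]$ at $pc\sqcup\ell$,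 then $\mathbf{case}(e,x.e_1,x.e_2)\Downarrow v$; symmetrically for $\mathbf{inr}$. (Pair) $(e_1,e_2)\Downarrow(v_1,v_2)^{pc}$. (Fst/Snd) if $e\Downarrow(v_1,v_2)^\ell$ then $\mathbf{fst}(e)\Downarrow v_1\sqcup\ell$, $\mathbf{snd}(e)\Downarrow v_2\sqcup\ell$. (LabelOf) if $e\Downarrow r^\ell$ then $\mathbf{labelOf}(e)\Downarrow\ell^\ell$. (Compare) if $e_1\Downarrow\ell_1^{\ell_1'}$, $e_2\Downarrow\ell_2^{\ell_2'}$ then $e_1\sqsubseteq^?e_2\Downarrow\mathbf{inl}(()^{pc})^{\ell_1'\sqcup\ell_2'}$ if $\ell_1\sqsubseteq\ell_2$, else $\mathbf{inr}(()^{pc})^{\ell_1'\sqcup\ell_2'}$. (Taint) if $e_1\Downarrow\ell^{\ell'}$, $\ell'\sqsubseteq\ell$, and $e_2$ evaluates to $v$ with program counter $\ell$, then $\mathbf{taint}(e_1,e_2)\Downarrow v$. Flow-insensitive references ($\mathbf{Ref}\,I$): (New) if $e\Downarrow r^\ell$ with store $\Sigma'$, $n=|\Sigma'(\ell)|$, then $\mathbf{new}(e)\Downarrow(n_\ell)^{pc}$ with store $\Sigma'[\ell\mapsto\Sigma'(\ell)[n\mapsto r]]$; (Read) if $e\Downarrow(n_\ell)^{\ell'}$ with store $\Sigma'$, $\Sigma'(\ell)[n]=r$, then $!e\Downarrow r^{\ell\sqcup\ell'}$; (Write) if $e_1\Downarrow(n_\ell)^{\ell_1}$, $\ell_1\sqsubseteq\ell$,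 $e_2\Downarrow r^{\ell_2}$ with store $\Sigma''$, $\ell_2\sqsubseteq\ell$, then $e_1:=e_2\Downarrow()^{pc}$ with store $\Sigma''[\ell\mapsto\Sigma''(\ell)[n\mapsto r]]$; (LabelOfRef) if $e\Downarrow(n_\ell)^{\ell'}$ then $\mathbf{labelOfRef}(e)\Downarrow\ell^{\ell\sqcup\ell'}$. Flow-sensitive references ($\mathbf{Ref}\,S$): (New-FS) if $e\Downarrow v$ with heap $\mu'$ and $n=|\mu'|$, then $\mathbf{new}(e)\Downarrow n^{pc}$ with heap $\mu'[n\mapsto v]$; (Read-FS) if $e\Downarrow n^{\ell}$ with heap $\mu'$ and $\mu'[n]=r^{\ell'}$, then $!e\Downarrow r^{\ell\sqcup\ell'}$; (LabelOfRef-FS) if $e\Downarrow n^{\ell_1}$ with heap $\mu'$ and $\mu'[n]=r^{\ell_2}$ then $\mathbf{labelOfRef}(e)\Downarrow\ell_2^{\ell_1\sqcup\ell_2}$; (Write-FS) if $e_1\Downarrow n^{\ell}$, $e_2\Downarrow r_2^{\ell_2}$ with heap $\mu''$, $\mu''[n]=r_1^{\ell_1}$ and $\ell\sqsubseteq\ell_1$, then $e_1:=e_2\Downarrow()^{pc}$ with heap $\mu''[n\mapsto r_2^{\ell_2\sqcup\ell}]$. Initial configurations are $\langle\Sigma,\mu,e\rangle$, final ones $\langle\Sigma,\mu,v\rangle$, and $c\Downarrow^\theta_{pc}c'$ is the evaluation relation. A partial bijection $\beta$ is a finite injective partial function $\mathbb N\rightharpoonup\mathbb N$; $\beta\subseteq\beta'$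 means every pair of $\beta$ is in $\beta'$. $A$-equivalence up to $\beta$ ($\approx^\beta_A$), mutually on values and raw values: $r_1^\ell\approx^\beta_A r_2^\ell$ if $\ell\sqsubseteq A$ and $r_1\approx^\beta_A r_2$; $r_1^{\ell_1}\approx^\beta_A r_2^{\ell_2}$ if $\ell_1,\ell_2\not\sqsubseteq A$; $()\approx()$, $\ell\approx\ell$; closures $(x.e_1,\theta_1)\approx^\beta_A(x.e_2,\theta_2)$ if $e_1,e_2$ $\alpha$-equivalent and $\theta_1\approx^\beta_A\theta_2$ (same domain, pointwise); injections and pairs homomorphically; $n_\ell\approx^\beta_A n_\ell$ if $\ell\sqsubseteq A$; $(n_1)_{\ell_1}\approx^\beta_A(n_2)_{\ell_2}$ if $\ell_1,\ell_2\not\sqsubseteq A$; $n_1\approx^\beta_A n_2$ (heap addresses) iff $\beta(n_1)=n_2$. Memories at label $\ell$: always related if $\ell\not\sqsubseteq A$, otherwise same length and pointwise related; stores pointwise. Heaps: $\mu_1\approx^\beta_A\mu_2$ iff $\mathrm{dom}(\beta)\subseteq\{0,\dots,|\mu_1|-1\}$, $\mathrm{rng}(\beta)\subseteq\{0,\dots,|\mu_2|-1\}$ and $\mu_1[n_1]\approx^\beta_A\mu_2[n_2]$ whenever $\beta(n_1)=n_2$. Initial configurations $\langle\Sigma_1,\mu_1,e_1\rangle\approx^\beta_A\langle\Sigma_2,\mu_2,e_2\rangle$ iff $\Sigma_1\approx^\beta_A\Sigma_2$, $\mu_1\approx^\beta_A\mu_2$ and $e_1,e_2$ $\alpha$-equivalent;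 final configurations $\langle\Sigma_1,\mu_1,v_1\rangle\approx^\beta_A\langle\Sigma_2,\mu_2,v_2\rangle$ iff the stores, heaps and values are related up to $\beta$. Validity: $n\vdash\mathbf{Valid}(x)$ for a value, raw value, environment, memory, store or heap $x$ means every flow-sensitive heap address $n'$ occurring in $x$ (including inside closure environments and nested values) satisfies $n'<n$ (flow-insensitive references $n'_\ell$ are always valid). $\vdash\mathbf{Valid}(\langle\Sigma,\mu,e\rangle,\theta)$ iff, for $n=|\mu|$, $n\vdash\mathbf{Valid}(\Sigma)$, $n\vdash\mathbf{Valid}(\mu)$ and $n\vdash\mathbf{Valid}(\theta)$. *)

From HB Require Import structures.
From Stdlib Require Import List.
From mathcomp Require Import all_boot all_order.

Set Implicit Arguments.
Unset Strict Implicit.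
Unset Printing Implicit Defensive.

Section DFG.
Variables (disp : Order.disp_t) (L : latticeType disp).

Definition lle (l1 l2 : L) : bool := (l1 <= l2)%O.
Definition ljoin (l1 l2 : L) : L := Order.join l1 l2.

(* reference tag: I = flow-insensitive, S = flow-sensitive.  Terms are
   implicitly well-typed in the paper; the type Ref s tau of the reference
   argument determines which rules apply.  We record this tag s explicitly
   on the reference-manipulating constructs. *)
Inductive rtag := TagI | TagS.

(* Expressions, with de Bruijn indices for variables (so that alpha-equivalent
   terms are identified; EVar 0 is the innermost bound variable).
   ELam e binds 0 in e; ECase e e1 e2 binds 0 in e1 and in e2. *)
Inductive exp :=
| EVar (x : nat)
| ELam (e : exp)
| EApp (e1 e2 : exp)
| EUnit
| ELabel (l : L)
| EPair (e1 e2 : exp)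
| EFst (e : exp)
| ESnd (e : exp)
| EInl (e : exp)
| EInr (e : exp)
| ECase (e e1 e2 : exp)
| EGetLabel
| ELabelOf (e : exp)
| ECompare (e1 e2 : exp)
| ETaint (e1 e2 : exp)
| ENew (s : rtag) (e : exp)
| ERead (s : rtag) (e : exp)
| EWrite (s : rtag) (e1 e2 : exp)
| ELabelOfRef (s : rtag) (e : exp).

(* Raw values and labeled values r^l.  A closure (x.e, theta) is
   RClos e theta, where theta is an environment: index i of the list gives
   the value of de Bruijn variable i. *)
Inductive raw :=
| RUnit
| RClos (e : exp) (th : list value)
| RInl (v : value)
| RInr (v : value)
| RPair (v1 v2 : value)
| RLabel (l : L)
| RRefI (n : nat) (l : L)      (* n_l : flow-insensitive reference into memory l *)
| RAddr (n : nat)              (* n : flow-sensitive heap address *)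
with value :=
| Val (r : raw) (l : L).

Definition env := list value.
Definition memory := list raw.
Definition store := L -> memory.
Definition heap := list value.

Definition vjoin (v : value) (l' : L) : value :=
  match v with Val r l => Val r (ljoin l l') end.

(* X[n |-> y]: replace entry n, or append if n = |X|
   (only used with n <= |X|, which the rules ensure). *)
Definition lupd {T : Type} (d0 : T) (X : list T) (n : nat) (y : T) : list T :=
  set_nth d0 X n y.

Definition store_upd (St : store) (l : L) (m : memory) : store :=
  fun l' => if l' == l then m else St l'.

Inductive icfg := ICfg (St : store) (mu : heap) (e : exp).
Inductive fcfg := FCfg (St : store) (mu : heap) (v : value).

(* Big-step evaluation  <St,mu,e> ⇓^theta_pc <St',mu',v>  is  eval theta pc c c'. *)
Inductive eval : env -> L -> icfg -> fcfg -> Prop :=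
| ev_var th pc St mu x v :
    nth_error th x = Some v ->
    eval th pc (ICfg St mu (EVar x)) (FCfg St mu (vjoin v pc))
| ev_unit th pc St mu :
    eval th pc (ICfg St mu EUnit) (FCfg St mu (Val RUnit pc))
| ev_label th pc St mu l :
    eval th pc (ICfg St mu (ELabel l)) (FCfg St mu (Val (RLabel l) pc))
| ev_fun th pc St mu e :
    eval th pc (ICfg St mu (ELam e)) (FCfg St mu (Val (RClos e th) pc))
| ev_getlabel th pc St mu :
    eval th pc (ICfg St mu EGetLabel) (FCfg St mu (Val (RLabel pc) pc))
| ev_app th pc St mu e1 e2 S1 mu1 e th' l S2 mu2 v2 S3 mu3 v :
    eval th pc (ICfg St mu e1) (FCfg S1 mu1 (Val (RClos e th') l)) ->
    eval th pc (ICfg S1 mu1 e2) (FCfg S2 mu2 v2) ->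
    eval (v2 :: th') (ljoin pc l) (ICfg S2 mu2 e) (FCfg S3 mu3 v) ->
    eval th pc (ICfg St mu (EApp e1 e2)) (FCfg S3 mu3 v)
| ev_inl th pc St mu e S1 mu1 v :
    eval th pc (ICfg St mu e) (FCfg S1 mu1 v) ->
    eval th pc (ICfg St mu (EInl e)) (FCfg S1 mu1 (Val (RInl v) pc))
| ev_inr th pc St mu e S1 mu1 v :
    eval th pc (ICfg St mu e) (FCfg S1 mu1 v) ->
    eval th pc (ICfg St mu (EInr e)) (FCfg S1 mu1 (Val (RInr v) pc))
| ev_case_inl th pc St mu e e1 e2 S1 mu1 v1 l S2 mu2 v :
    eval th pc (ICfg St mu e) (FCfg S1 mu1 (Val (RInl v1) l)) ->
    eval (v1 :: th) (ljoin pc l) (ICfg S1 mu1 e1) (FCfg S2 mu2 v) ->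
    eval th pc (ICfg St mu (ECase e e1 e2)) (FCfg S2 mu2 v)
| ev_case_inr th pc St mu e e1 e2 S1 mu1 v1 l S2 mu2 v :
    eval th pc (ICfg St mu e) (FCfg S1 mu1 (Val (RInr v1) l)) ->
    eval (v1 :: th) (ljoin pc l) (ICfg S1 mu1 e2) (FCfg S2 mu2 v) ->
    eval th pc (ICfg St mu (ECase e e1 e2)) (FCfg S2 mu2 v)
| ev_pair th pc St mu e1 e2 S1 mu1 v1 S2 mu2 v2 :
    eval th pc (ICfg St mu e1) (FCfg S1 mu1 v1) ->
    eval th pc (ICfg S1 mu1 e2) (FCfg S2 mu2 v2) ->
    eval th pc (ICfg St mu (EPair e1 e2)) (FCfg S2 mu2 (Val (RPair v1 v2) pc))
| ev_fst th pc St mu e S1 mu1 v1 v2 l :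
    eval th pc (ICfg St mu e) (FCfg S1 mu1 (Val (RPair v1 v2) l)) ->
    eval th pc (ICfg St mu (EFst e)) (FCfg S1 mu1 (vjoin v1 l))
| ev_snd th pc St mu e S1 mu1 v1 v2 l :
    eval th pc (ICfg St mu e) (FCfg S1 mu1 (Val (RPair v1 v2) l)) ->
    eval th pc (ICfg St mu (ESnd e)) (FCfg S1 mu1 (vjoin v2 l))
| ev_labelof th pc St mu e S1 mu1 r l :
    eval th pc (ICfg St mu e) (FCfg S1 mu1 (Val r l)) ->
    eval th pc (ICfg St mu (ELabelOf e)) (FCfg S1 mu1 (Val (RLabel l) l))
| ev_compare th pc St mu e1 e2 S1 mu1 l1 l1' S2 mu2 l2 l2' :
    eval th pc (ICfg St mu e1) (FCfg S1 mu1 (Val (RLabel l1) l1')) ->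
    eval th pc (ICfg S1 mu1 e2) (FCfg S2 mu2 (Val (RLabel l2) l2')) ->
    eval th pc (ICfg St mu (ECompare e1 e2))
      (FCfg S2 mu2 (Val (if lle l1 l2 then RInl (Val RUnit pc)
                         else RInr (Val RUnit pc)) (ljoin l1' l2')))
| ev_taint th pc St mu e1 e2 S1 mu1 l l' S2 mu2 v :
    eval th pc (ICfg St mu e1) (FCfg S1 mu1 (Val (RLabel l) l')) ->
    lle l' l ->
    eval th l (ICfg S1 mu1 e2) (FCfg S2 mu2 v) ->
    eval th pc (ICfg St mu (ETaint e1 e2)) (FCfg S2 mu2 v)
| ev_new th pc St mu e S1 mu1 r l :
    eval th pc (ICfg St mu e) (FCfg S1 mu1 (Val r l)) ->
    eval th pc (ICfg St mu (ENew TagI e))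
      (FCfg (store_upd S1 l (lupd RUnit (S1 l) (size (S1 l)) r)) mu1
            (Val (RRefI (size (S1 l)) l) pc))
| ev_read th pc St mu e S1 mu1 n l l' r :
    eval th pc (ICfg St mu e) (FCfg S1 mu1 (Val (RRefI n l) l')) ->
    nth_error (S1 l) n = Some r ->
    eval th pc (ICfg St mu (ERead TagI e)) (FCfg S1 mu1 (Val r (ljoin l l')))
| ev_write th pc St mu e1 e2 S1 mu1 n l l1 S2 mu2 r l2 :
    eval th pc (ICfg St mu e1) (FCfg S1 mu1 (Val (RRefI n l) l1)) ->
    lle l1 l ->
    eval th pc (ICfg S1 mu1 e2) (FCfg S2 mu2 (Val r l2)) ->
    lle l2 l ->
    n <= size (S2 l) ->
    eval th pc (ICfg St mu (EWrite TagI e1 e2))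
      (FCfg (store_upd S2 l (lupd RUnit (S2 l) n r)) mu2 (Val RUnit pc))
| ev_labelofref th pc St mu e S1 mu1 n l l' :
    eval th pc (ICfg St mu e) (FCfg S1 mu1 (Val (RRefI n l) l')) ->
    eval th pc (ICfg St mu (ELabelOfRef TagI e))
      (FCfg S1 mu1 (Val (RLabel l) (ljoin l l')))
| ev_new_fs th pc St mu e S1 mu1 v :
    eval th pc (ICfg St mu e) (FCfg S1 mu1 v) ->
    eval th pc (ICfg St mu (ENew TagS e))
      (FCfg S1 (lupd v mu1 (size mu1) v) (Val (RAddr (size mu1)) pc))
| ev_read_fs th pc St mu e S1 mu1 n l r l' :
    eval th pc (ICfg St mu e) (FCfg S1 mu1 (Val (RAddr n) l)) ->
    nth_error mu1 n = Some (Val r l') ->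
    eval th pc (ICfg St mu (ERead TagS e)) (FCfg S1 mu1 (Val r (ljoin l l')))
| ev_labelofref_fs th pc St mu e S1 mu1 n l1 r l2 :
    eval th pc (ICfg St mu e) (FCfg S1 mu1 (Val (RAddr n) l1)) ->
    nth_error mu1 n = Some (Val r l2) ->
    eval th pc (ICfg St mu (ELabelOfRef TagS e))
      (FCfg S1 mu1 (Val (RLabel l2) (ljoin l1 l2)))
| ev_write_fs th pc St mu e1 e2 S1 mu1 n l S2 mu2 r2 l2 r1 l1 :
    eval th pc (ICfg St mu e1) (FCfg S1 mu1 (Val (RAddr n) l)) ->
    eval th pc (ICfg S1 mu1 e2) (FCfg S2 mu2 (Val r2 l2)) ->
    nth_error mu2 n = Some (Val r1 l1) ->
    lle l l1 ->
    eval th pc (ICfg St mu (EWrite TagS e1 e2))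
      (FCfg S2 (lupd (Val r2 l2) mu2 n (Val r2 (ljoin l2 l))) (Val RUnit pc)).

Definition pbij (b : nat -> option nat) : Prop :=
  (forall n1 n2 m, b n1 = Some m -> b n2 = Some m -> n1 = n2) /\
  (exists N, forall n, N <= n -> b n = None).

Definition bsub (b b' : nat -> option nat) : Prop :=
  forall n m, b n = Some m -> b' n = Some m.

Inductive veq (A : L) (b : nat -> option nat) : value -> value -> Prop :=
| veq_low r1 r2 l : lle l A -> req A b r1 r2 -> veq A b (Val r1 l) (Val r2 l)
| veq_high r1 r2 l1 l2 : ~~ lle l1 A -> ~~ lle l2 A -> veq A b (Val r1 l1) (Val r2 l2)
with req (A : L) (b : nat -> option nat) : raw -> raw -> Prop :=
| req_unit : req A b RUnit RUnit
| req_label l : req A b (RLabel l) (RLabel l)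
| req_clos e th1 th2 : eeq A b th1 th2 -> req A b (RClos e th1) (RClos e th2)
| req_inl v1 v2 : veq A b v1 v2 -> req A b (RInl v1) (RInl v2)
| req_inr v1 v2 : veq A b v1 v2 -> req A b (RInr v1) (RInr v2)
| req_pair v1 v2 w1 w2 : veq A b v1 w1 -> veq A b v2 w2 ->
    req A b (RPair v1 v2) (RPair w1 w2)
| req_refI_low n l : lle l A -> req A b (RRefI n l) (RRefI n l)
| req_refI_high n1 l1 n2 l2 : ~~ lle l1 A -> ~~ lle l2 A ->
    req A b (RRefI n1 l1) (RRefI n2 l2)
| req_addr n1 n2 : b n1 = Some n2 -> req A b (RAddr n1) (RAddr n2)
with eeq (A : L) (b : nat -> option nat) : env -> env -> Prop :=
| eeq_nil : eeq A b nil nil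
| eeq_cons v1 v2 th1 th2 : veq A b v1 v2 -> eeq A b th1 th2 ->
    eeq A b (v1 :: th1) (v2 :: th2).

Definition mem_eq (A : L) (b : nat -> option nat) (l : L) (m1 m2 : memory) : Prop :=
  lle l A ->
  size m1 = size m2 /\
  (forall i r1 r2, nth_error m1 i = Some r1 -> nth_error m2 i = Some r2 ->
     req A b r1 r2).

Definition store_eq (A : L) (b : nat -> option nat) (S1 S2 : store) : Prop :=
  forall l, mem_eq A b l (S1 l) (S2 l).

(* dom(b) ⊆ {0..|mu1|-1}, rng(b) ⊆ {0..|mu2|-1}, and related entries *)
Definition heap_eq (A : L) (b : nat -> option nat) (mu1 mu2 : heap) : Prop :=
  forall n1 n2, b n1 = Some n2 ->
    exists v1 v2, nth_error mu1 n1 = Some v1 /\ nth_error mu2 n2 = Some v2 /\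
                  veq A b v1 v2.

(* alpha-equivalence is syntactic equality in the de Bruijn representation *)
Definition icfg_eq (A : L) (b : nat -> option nat) (c1 c2 : icfg) : Prop :=
  match c1, c2 with
  | ICfg S1 mu1 e1, ICfg S2 mu2 e2 =>
      store_eq A b S1 S2 /\ heap_eq A b mu1 mu2 /\ e1 = e2
  end.

Definition fcfg_eq (A : L) (b : nat -> option nat) (c1 c2 : fcfg) : Prop :=
  match c1, c2 with
  | FCfg S1 mu1 v1, FCfg S2 mu2 v2 =>
      store_eq A b S1 S2 /\ heap_eq A b mu1 mu2 /\ veq A b v1 v2
  end.

Inductive vvalid (N : nat) : value -> Prop :=
| vvalid_val r l : rvalid N r -> vvalid N (Val r l)
with rvalid (N : nat) : raw -> Prop :=
| rvalid_unit : rvalid N RUnit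
| rvalid_clos e th : evalid N th -> rvalid N (RClos e th)
| rvalid_inl v : vvalid N v -> rvalid N (RInl v)
| rvalid_inr v : vvalid N v -> rvalid N (RInr v)
| rvalid_pair v1 v2 : vvalid N v1 -> vvalid N v2 -> rvalid N (RPair v1 v2)
| rvalid_label l : rvalid N (RLabel l)
| rvalid_refI n l : rvalid N (RRefI n l)
| rvalid_addr n : n < N -> rvalid N (RAddr n)
with evalid (N : nat) : env -> Prop :=
| evalid_nil : evalid N nil
| evalid_cons v th : vvalid N v -> evalid N th -> evalid N (v :: th).

Definition store_valid (N : nat) (St : store) : Prop :=
  forall l, List.Forall (rvalid N) (St l).

Definition heap_valid (N : nat) (mu : heap) : Prop :=
  List.Forall (vvalid N) mu.

Definition cfg_valid (c : icfg) (th : env) : Prop :=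
  match c with
  | ICfg St mu e =>
      store_valid (size mu) St /\ heap_valid (size mu) mu /\ evalid (size mu) th
  end.

End DFG.

(* Confinement: an evaluation at a program counter pc with pc not below A leaves
   every low memory unchanged, only overwrites heap cells whose label is already
   high (and keeps them high), and returns a value labelled above pc.  Hence two
   runs started at high program counters from related stores and heaps end in
   related configurations, under the same bijection.

   At a low pc we induct on the first derivation and invert the second, which
   evaluates the same expression.  Results of subcomputations are related under
   a growing bijection: allocating a flow-sensitive cell extends it by the pair
   of fresh addresses, which are outside the bijection because heap equivalence
   keeps its domain and range inside the two heaps.  Whenever control depends on
   a high value (applying a high closure, a case on a high sum, tainting to a
   high label), both continuations run at a high pc and confinement applies. *)

From mathcomp Require Import all_boot all_order.
From Stdlib Require Import List.
Import Order.LTheory.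

Set Implicit Arguments.
Unset Strict Implicit.
Unset Printing Implicit Defensive.

Section NonInterference.
Variables (disp : Order.disp_t) (L : latticeType disp) (A : L).

Implicit Types (l k pc : L) (b : nat -> option nat) (v w : value L) (r : raw L)
  (th : env L) (mu : heap L) (S : store L).

Lemma lle_join l1 l2 l3 : lle (ljoin l1 l2) l3 = lle l1 l3 && lle l2 l3.
Proof. exact: leUx. Qed.

Lemma high_le l k : ~~ lle l A -> lle l k -> ~~ lle k A.
Proof. by move=> hl hlk; apply: contra hl; apply: le_trans. Qed.

Lemma high_joinl l k : ~~ lle l A -> ~~ lle (ljoin l k) A.
Proof. by move=> hl; apply: high_le hl (leUl _ _). Qed.

Lemma high_joinr l k : ~~ lle k A -> ~~ lle (ljoin l k) A.
Proof. by move=> hk; apply: high_le hk (leUr _ _). Qed.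

Definition vlabel v : L := let: Val _ l := v in l.

Lemma vlabel_vjoin v l : vlabel (vjoin v l) = ljoin (vlabel v) l.
Proof. by case: v. Qed.

Lemma bsub_refl b : bsub b b.
Proof. by []. Qed.

Lemma bsub_trans b1 b2 b3 : bsub b1 b2 -> bsub b2 b3 -> bsub b1 b3.
Proof. by move=> h12 h23 n m /h12 /h23. Qed.

Scheme veq_mut := Induction for veq Sort Prop
with req_mut := Induction for req Sort Prop
with eeq_mut := Induction for eeq Sort Prop.
Combined Scheme equiv_mutind from veq_mut, req_mut, eeq_mut.

Lemma equiv_bsub b b' : bsub b b' ->
  (forall v w, veq A b v w -> veq A b' v w) /\
  (forall r1 r2, req A b r1 r2 -> req A b' r1 r2) /\
  (forall th1 th2, eeq A b th1 th2 -> eeq A b' th1 th2).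
Proof. by move=> hb; apply: equiv_mutind; intros; econstructor; eauto. Qed.

Lemma veq_bsub b b' v w : bsub b b' -> veq A b v w -> veq A b' v w.
Proof. by move/equiv_bsub => [+ _]; apply. Qed.

Lemma req_bsub b b' r1 r2 : bsub b b' -> req A b r1 r2 -> req A b' r1 r2.
Proof. by move/equiv_bsub => [_ [+ _]]; apply. Qed.

Lemma eeq_bsub b b' th1 th2 : bsub b b' -> eeq A b th1 th2 -> eeq A b' th1 th2.
Proof. by move/equiv_bsub => [_ [_ +]]; apply. Qed.

Lemma store_eq_bsub b b' S1 S2 : bsub b b' -> store_eq A b S1 S2 -> store_eq A b' S1 S2.
Proof.
move=> hb hS l /hS [hsz hm]; split=> // i r1 r2 h1 h2.
exact: req_bsub hb (hm _ _ _ h1 h2).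
Qed.

Lemma eeq_nth b th1 th2 x v w : eeq A b th1 th2 ->
  nth_error th1 x = Some v -> nth_error th2 x = Some w -> veq A b v w.
Proof.
move=> he; elim: he x => [|v1 v2 t1 t2 hv _ IH] [|x] //=; last exact: IH.
by move=> [<-] [<-].
Qed.

Lemma veq_req b r1 r2 l : req A b r1 r2 -> veq A b (Val r1 l) (Val r2 l).
Proof.
by move=> hr; case hl: (lle l A); [apply: veq_low | apply: veq_high; rewrite hl].
Qed.

Lemma veq_high_labels b v w :
  ~~ lle (vlabel v) A -> ~~ lle (vlabel w) A -> veq A b v w.
Proof. by case: v; case: w => /= *; apply: veq_high. Qed.

Lemma veq_Val_inv b r1 r2 l1 l2 : veq A b (Val r1 l1) (Val r2 l2) ->
  [/\ lle l1 A, l2 = l1 & req A b r1 r2] \/ ~~ lle l1 A /\ ~~ lle l2 A.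
Proof. by move=> h; inversion h; subst; [left | right]. Qed.

Lemma veq_vjoin b v w l : veq A b v w -> veq A b (vjoin v l) (vjoin w l).
Proof.
case=> [r1 r2 k _ hr | r1 r2 l1 l2 h1 h2] /=; first exact: veq_req.
by apply: veq_high; apply: high_joinl.
Qed.

Lemma veq_joinl b r1 r2 l1 l2 l : veq A b (Val r1 l1) (Val r2 l2) ->
  veq A b (Val r1 (ljoin l l1)) (Val r2 (ljoin l l2)).
Proof.
case/veq_Val_inv => [[_ -> hr] | [h1 h2]]; first exact: veq_req.
by apply: veq_high; apply: high_joinr.
Qed.

Lemma veq_vjoin_guard b g1 g2 l1 l2 w1 w2 : veq A b (Val g1 l1) (Val g2 l2) ->
  (lle l1 A -> req A b g1 g2 -> veq A b w1 w2) ->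
  veq A b (vjoin w1 l1) (vjoin w2 l2).
Proof.
case/veq_Val_inv => [[hl -> hg] hw | [h1 h2] _]; first exact/veq_vjoin/hw.
by apply: veq_high_labels; rewrite vlabel_vjoin; apply: high_joinr.
Qed.

Lemma veq_joinl_guard b g1 g2 l1 l2 r1 r2 k1 k2 :
  veq A b (Val g1 l1) (Val g2 l2) ->
  (lle l1 A -> req A b g1 g2 -> veq A b (Val r1 k1) (Val r2 k2)) ->
  veq A b (Val r1 (ljoin l1 k1)) (Val r2 (ljoin l2 k2)).
Proof.
case/veq_Val_inv => [[hl -> hg] hr | [h1 h2] _]; first exact/veq_joinl/hr.
by apply: veq_high; apply: high_joinl.
Qed.

Lemma veq_labelOf b r1 r2 l1 l2 : veq A b (Val r1 l1) (Val r2 l2) ->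
  veq A b (Val (RLabel l1) l1) (Val (RLabel l2) l2).
Proof.
case/veq_Val_inv => [[_ -> _] | [h1 h2]]; first exact/veq_req/req_label.
exact: veq_high.
Qed.

Lemma nth_error_set_nth (T : Type) (d : T) s n y i : n <= size s ->
  nth_error (set_nth d s n y) i = if i == n then Some y else nth_error s i.
Proof.
elim: s n i => [|x s IH] [|n] [|i] //=; first by case: i.
exact: IH.
Qed.

Lemma nth_error_lt_size (T : Type) (s : list T) n x : nth_error s n = Some x -> n < size s.
Proof. by elim: s n => [|y s IH] [|n] //= /IH. Qed.

(** * Confinement *)

Definition store_confined S S' := forall l, lle l A -> S' l = S l.

Definition heap_confined mu mu' := forall n v, nth_error mu n = Some v ->
  exists2 v', nth_error mu' n = Some v' &
    if lle (vlabel v) A then v' = v else ~~ lle (vlabel v') A.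

Lemma store_confined_refl S : store_confined S S.
Proof. by []. Qed.

Lemma store_confined_trans S1 S2 S3 :
  store_confined S1 S2 -> store_confined S2 S3 -> store_confined S1 S3.
Proof. by move=> h12 h23 l hl; rewrite h23 // h12. Qed.

Lemma heap_confined_refl mu : heap_confined mu mu.
Proof. by move=> n v hn; exists v => //; case: ifP => [|/negbT]. Qed.


Lemma heap_confined_trans mu1 mu2 mu3 :
  heap_confined mu1 mu2 -> heap_confined mu2 mu3 -> heap_confined mu1 mu3.
Proof.
move=> h12 h23 n v /h12 [v' /h23 [v'' hn'' hv''] hv']; exists v'' => //.
case: ifP hv' => [hl hv | _ hl]; first by subst v'; rewrite hl in hv''.
by rewrite (negbTE hl) in hv''.
Qed.

Lemma heap_confined_alloc mu d v : heap_confined mu (lupd d mu (size mu) v).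
Proof.
move=> n w hn; exists w; last by case: ifP => [|/negbT].
rewrite /lupd nth_error_set_nth // ltn_eqF //.
exact: nth_error_lt_size hn.
Qed.

Lemma heap_confined_upd_high mu d n v v' : nth_error mu n = Some v ->
  ~~ lle (vlabel v) A -> ~~ lle (vlabel v') A -> heap_confined mu (lupd d mu n v').
Proof.
move=> hn hv hv' m w hm; rewrite /lupd nth_error_set_nth; last first.
  exact/ltnW/(nth_error_lt_size hn).
case: eqP => [em | _].
  by exists v' => //; move: hm; rewrite em hn => -[<-]; rewrite (negbTE hv).
by exists w => //; case: ifP => [|/negbT].
Qed.

Lemma store_confined_upd_high S l m : ~~ lle l A -> store_confined S (store_upd S l m).
Proof. by move=> hl k hk; rewrite /store_upd; case: eqP => // ek; rewrite -ek hk in hl. Qed.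

Lemma store_eq_confined b S1 S2 S1' S2' : store_eq A b S1 S2 ->
  store_confined S1 S1' -> store_confined S2 S2' -> store_eq A b S1' S2'.
Proof. by move=> hS h1 h2 l hl; rewrite h1 // h2 //; apply: hS. Qed.

Lemma heap_eq_confined b mu1 mu2 mu1' mu2' : heap_eq A b mu1 mu2 ->
  heap_confined mu1 mu1' -> heap_confined mu2 mu2' -> heap_eq A b mu1' mu2'.
Proof.
move=> hH h1 h2 n1 n2 /hH [v1 [v2 [/h1 [v1' e1 hv1] [/h2 [v2' e2 hv2] hv]]]].
exists v1', v2'; split=> //; split=> //.
case: hv hv1 hv2 => [r1 r2 l hl hr | r1 r2 l1 l2 hl1 hl2] /=.
  by rewrite hl => -> ->; apply: veq_low.
by rewrite (negbTE hl1) (negbTE hl2); apply: veq_high_labels.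
Qed.

Lemma store_eq_upd_low b S1 S2 l n d r1 r2 : store_eq A b S1 S2 -> lle l A ->
  n <= size (S1 l) -> req A b r1 r2 ->
  store_eq A b (store_upd S1 l (lupd d (S1 l) n r1))
               (store_upd S2 l (lupd d (S2 l) n r2)).
Proof.
move=> hS hl hn hr k; rewrite /store_upd; case: eqP => [-> _ | _]; last exact: hS.
have [hsz hm] := hS l hl; split; first by rewrite !size_set_nth hsz.
move=> i x1 x2; rewrite /lupd !nth_error_set_nth -?hsz //.
by case: eqP => _; [move=> [<-] [<-] | apply: hm].
Qed.

Lemma heap_eq_dom b mu1 mu2 n1 n2 : heap_eq A b mu1 mu2 -> b n1 = Some n2 ->
  n1 < size mu1 /\ n2 < size mu2.
Proof.
by move=> hH /hH [v1 [v2 [e1 [e2 _]]]]; split; apply: nth_error_lt_size; eassumption.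
Qed.

Lemma heap_eq_upd b mu1 mu2 n1 n2 d1 d2 v w : pbij b -> heap_eq A b mu1 mu2 ->
  b n1 = Some n2 -> veq A b v w -> heap_eq A b (lupd d1 mu1 n1 v) (lupd d2 mu2 n2 w).
Proof.
move=> [inj _] hH hn hv m1 m2 hm; have [s1 s2] := heap_eq_dom hH hn.
rewrite /lupd !nth_error_set_nth ?(ltnW s1, ltnW s2) //.
have [em1 | nm1] := eqVneq m1 n1.
  by move: hm; rewrite em1 hn => -[<-]; rewrite eqxx; exists v, w.
have [em2 | _] := eqVneq m2 n2; last exact: hH.
by rewrite em2 in hm; rewrite (inj _ _ _ hm hn) eqxx in nm1.
Qed.

Definition bext b n1 n2 : nat -> option nat :=
  fun n => if n == n1 then Some n2 else b n.

Section Alloc.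
Variables (b : nat -> option nat) (mu1 mu2 : heap L).
Hypothesis hH : heap_eq A b mu1 mu2.
Let b' := bext b (size mu1) (size mu2).

Lemma bsub_bext : bsub b b'.
Proof.
move=> n m hn; rewrite /b' /bext.
by have [/ltn_eqF -> _] := heap_eq_dom hH hn.
Qed.

Lemma pbij_bext : pbij b -> pbij b'.
Proof.
move=> [inj [N hN]]; split.
  move=> n1 n2 m; rewrite /b' /bext.
  have [-> | _] := eqVneq n1 (size mu1); have [-> | _] := eqVneq n2 (size mu1) => //.
  - by move=> [<-] /(heap_eq_dom hH) []; rewrite ltnn.
  - by move=> hn [em]; subst m; case: (heap_eq_dom hH hn); rewrite ltnn.
  - exact: inj.
exists (maxn N (size mu1).+1) => n; rewrite geq_max => /andP [hNn hsn].
by rewrite /b' /bext gtn_eqF ?hN.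
Qed.

Lemma heap_eq_alloc d1 d2 v w : veq A b v w ->
  heap_eq A b' (lupd d1 mu1 (size mu1) v) (lupd d2 mu2 (size mu2) w).
Proof.
move=> hv m1 m2; rewrite /lupd !nth_error_set_nth // /b' /bext.
have [_ [<-] | _ hm] := eqVneq m1 (size mu1).
  by rewrite eqxx; exists v, w; split=> //; split=> //; exact: veq_bsub bsub_bext hv.
have [_ s2] := heap_eq_dom hH hm; rewrite ltn_eqF //.
have [y1 [y2 [e1 [e2 hy]]]] := hH hm.
by exists y1, y2; split=> //; split=> //; exact: veq_bsub bsub_bext hy.
Qed.

End Alloc.

Lemma req_clos_inv b e1 e2 th1 th2 : req A b (RClos e1 th1) (RClos e2 th2) ->
  e2 = e1 /\ eeq A b th1 th2.
Proof. by move=> h; inversion h. Qed.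

Lemma req_label_inv b l1 l2 : req A b (RLabel l1) (RLabel l2) -> l2 = l1.
Proof. by move=> h; inversion h. Qed.

Lemma req_inl_inv b v w : req A b (RInl v) (RInl w) -> veq A b v w.
Proof. by move=> h; inversion h. Qed.

Lemma req_inr_inv b v w : req A b (RInr v) (RInr w) -> veq A b v w.
Proof. by move=> h; inversion h. Qed.

Lemma req_pair_inv b v1 v2 w1 w2 : req A b (RPair v1 v2) (RPair w1 w2) ->
  veq A b v1 w1 /\ veq A b v2 w2.
Proof. by move=> h; inversion h. Qed.

Lemma req_refI_inv b n1 n2 l1 l2 : req A b (RRefI n1 l1) (RRefI n2 l2) ->
  [/\ n2 = n1, l2 = l1 & lle l1 A] \/ ~~ lle l1 A /\ ~~ lle l2 A.
Proof. by move=> h; inversion h; [left | right]. Qed.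

Lemma req_addr_inv b n1 n2 : req A b (RAddr L n1) (RAddr L n2) -> b n1 = Some n2.
Proof. by move=> h; inversion h. Qed.

Lemma veq_compare b pc l1 k1 m1 n1 l2 k2 m2 n2 :
  veq A b (Val (RLabel l1) k1) (Val (RLabel m1) n1) ->
  veq A b (Val (RLabel l2) k2) (Val (RLabel m2) n2) ->
  veq A b (Val (if lle l1 l2 then RInl (Val (RUnit L) pc) else RInr (Val (RUnit L) pc))
               (ljoin k1 k2))
          (Val (if lle m1 m2 then RInl (Val (RUnit L) pc) else RInr (Val (RUnit L) pc))
               (ljoin n1 n2)).
Proof.
move=> h1 h2; apply: (veq_joinl_guard h1) => _ /req_label_inv ->.
case/veq_Val_inv: h2 => [[_ -> /req_label_inv ->] | [hk hn]]; last exact: veq_high.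
by apply: veq_req; case: ifP => _; constructor; apply/veq_req/req_unit.
Qed.

Lemma veq_labelOfRef b n1 n2 l1 l2 : req A b (RRefI n1 l1) (RRefI n2 l2) ->
  veq A b (Val (RLabel l1) l1) (Val (RLabel l2) l2).
Proof.
case/req_refI_inv => [[_ -> _] | [h1 h2]]; first exact/veq_req/req_label.
exact: veq_high.
Qed.

Lemma store_eq_nth b S1 S2 n1 n2 l1 l2 r1 r2 : store_eq A b S1 S2 ->
  req A b (RRefI n1 l1) (RRefI n2 l2) ->
  nth_error (S1 l1) n1 = Some r1 -> nth_error (S2 l2) n2 = Some r2 ->
  veq A b (Val r1 l1) (Val r2 l2).
Proof.
move=> hS; case/req_refI_inv => [[-> -> hl] h1 h2 | [h1 h2] _ _].
  by have [_ hm] := hS _ hl; apply/veq_req/(hm _ _ _ h1 h2).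
exact: veq_high.
Qed.

Lemma store_eq_alloc b S1 S2 r1 r2 l1 l2 : store_eq A b S1 S2 ->
  veq A b (Val r1 l1) (Val r2 l2) ->
  store_eq A b (store_upd S1 l1 (lupd (RUnit L) (S1 l1) (size (S1 l1)) r1))
               (store_upd S2 l2 (lupd (RUnit L) (S2 l2) (size (S2 l2)) r2)) /\
  req A b (RRefI (size (S1 l1)) l1) (RRefI (size (S2 l2)) l2).
Proof.
move=> hS; case/veq_Val_inv => [[hl -> hr] | [h1 h2]].
  have [hsz _] := hS _ hl; rewrite -hsz.
  by split; [apply: store_eq_upd_low | apply: req_refI_low].
split; last exact: req_refI_high.
by apply: store_eq_confined hS _ _; apply: store_confined_upd_high.
Qed.

Lemma store_eq_write b S1 S2 n1 n2 m1 m2 k1 k2 r1 r2 j1 j2 : store_eq A b S1 S2 ->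
  veq A b (Val (RRefI n1 m1) k1) (Val (RRefI n2 m2) k2) -> lle k1 m1 -> lle k2 m2 ->
  veq A b (Val r1 j1) (Val r2 j2) -> lle j1 m1 -> lle j2 m2 -> n1 <= size (S1 m1) ->
  store_eq A b (store_upd S1 m1 (lupd (RUnit L) (S1 m1) n1 r1))
               (store_upd S2 m2 (lupd (RUnit L) (S2 m2) n2 r2)).
Proof.
move=> hS href hk1 hk2 hv hj1 hj2 hn; have [hm1 | hm1] := boolP (lle m1 A).
  case/veq_Val_inv: href => [[_ _ /req_refI_inv] | [hk1' _]]; last first.
    by move/negP: (high_le hk1' hk1).
  case=> [[-> -> _] | [hm1' _]]; last by move/negP: hm1'.
  case/veq_Val_inv: hv => [[_ _ hr] | [hj1' _]]; last by move/negP: (high_le hj1' hj1).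
  exact: store_eq_upd_low.
have hm2 : ~~ lle m2 A.
  case/veq_Val_inv: href => [[_ _ /req_refI_inv] | [_ hk2']]; last exact: high_le hk2' hk2.
  by case=> [[_ -> _] | []].
by apply: store_eq_confined hS _ _; apply: store_confined_upd_high.
Qed.

Lemma heap_eq_nth b mu1 mu2 n1 n2 v1 v2 : heap_eq A b mu1 mu2 -> b n1 = Some n2 ->
  nth_error mu1 n1 = Some v1 -> nth_error mu2 n2 = Some v2 -> veq A b v1 v2.
Proof. by move=> hH /hH [w1 [w2 [-> [-> hw]]]] [<-] [<-]. Qed.

Lemma heap_eq_write b mu1 mu2 n1 n2 k1 k2 o1 o2 j1 j2 r1 r2 i1 i2 d1 d2 :
  pbij b -> heap_eq A b mu1 mu2 ->
  veq A b (Val (RAddr L n1) k1) (Val (RAddr L n2) k2) ->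
  nth_error mu1 n1 = Some (Val o1 j1) -> lle k1 j1 ->
  nth_error mu2 n2 = Some (Val o2 j2) -> lle k2 j2 ->
  veq A b (Val r1 i1) (Val r2 i2) ->
  heap_eq A b (lupd d1 mu1 n1 (Val r1 (ljoin i1 k1)))
              (lupd d2 mu2 n2 (Val r2 (ljoin i2 k2))).
Proof.
move=> hb hH; case/veq_Val_inv => [[_ -> /req_addr_inv hn] | [hk1 hk2]] h1 hj1 h2 hj2 hv.
  by apply: heap_eq_upd hn (veq_vjoin _ hv).
apply: heap_eq_confined hH _ _.
  by apply: (heap_confined_upd_high _ h1); [apply: high_le hk1 hj1 | apply: high_joinr].
by apply: (heap_confined_upd_high _ h2); [apply: high_le hk2 hj2 | apply: high_joinr].
Qed.

(** * Evaluation at a high program counter *)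

Lemma eval_pc_le th pc c c' : eval th pc c c' ->
  let: FCfg _ _ v := c' in lle pc (vlabel v).
Proof.
have trans (x y z : L) : (x <= y -> y <= z -> x <= z)%O by apply: le_trans.
elim=> {th pc c c'} /=; intros; rewrite ?vlabel_vjoin; unfold lle, ljoin in *;
  eauto using trans, leUl, leUr, lexx.
Qed.

Definition confined S mu S' mu' := store_confined S S' /\ heap_confined mu mu'.

Lemma confined_refl S mu : confined S mu S mu.
Proof. by split; [apply: store_confined_refl | apply: heap_confined_refl]. Qed.

Lemma confined_trans S1 mu1 S2 mu2 S3 mu3 :
  confined S1 mu1 S2 mu2 -> confined S2 mu2 S3 mu3 -> confined S1 mu1 S3 mu3.
Proof.
by move=> [hS12 hH12] [hS23 hH23]; split;
  [apply: store_confined_trans hS23 | apply: heap_confined_trans hH23].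
Qed.

Lemma eval_high_confined th pc c c' : eval th pc c c' -> ~~ lle pc A ->
  let: ICfg St mu _ := c in let: FCfg St' mu' _ := c' in confined St mu St' mu'.
Proof.
elim=> {th pc c c'} /=;
  try (intros; solve [eauto 6 using confined_refl, confined_trans, high_joinl]).
- move=> th pc St mu e1 e2 S1 mu1 e th' l S2 mu2 v2 S3 mu3 v _ IH1 _ IH2 _ IH3 hpc.
  exact: confined_trans (confined_trans (IH1 hpc) (IH2 hpc)) (IH3 (high_joinl _ hpc)).
- move=> th pc St mu e1 e2 S1 mu1 l l' S2 mu2 v ev1 IH1 hl' _ IH2 hpc.
  have hl : ~~ lle l A := high_le (high_le hpc (eval_pc_le ev1)) hl'.
  exact: confined_trans (IH1 hpc) (IH2 hl).
- move=> th pc St mu e S1 mu1 r l ev IH hpc.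
  apply: confined_trans (IH hpc) _; split; last exact: heap_confined_refl.
  exact/store_confined_upd_high/(high_le hpc (eval_pc_le ev)).
- move=> th pc St mu e1 e2 S1 mu1 n l l1 S2 mu2 r l2 ev1 IH1 hl1 _ IH2 _ _ hpc.
  apply: confined_trans (confined_trans (IH1 hpc) (IH2 hpc)) _.
  split; last exact: heap_confined_refl.
  exact/store_confined_upd_high/(high_le (high_le hpc (eval_pc_le ev1)) hl1).
- move=> > _ IH hpc.
  apply: confined_trans (IH hpc) _.
  by split; [apply: store_confined_refl | apply: heap_confined_alloc].
- move=> th pc St mu e1 e2 S1 mu1 n l S2 mu2 r2 l2 r1 l1 ev1 IH1 _ IH2 hn hl hpc.
  have hlh : ~~ lle l A := high_le hpc (eval_pc_le ev1).
  apply: confined_trans (confined_trans (IH1 hpc) (IH2 hpc)) _.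
  split; first exact: store_confined_refl.
  apply: (heap_confined_upd_high _ hn); [exact: high_le hlh hl | exact: high_joinr].
Qed.

Lemma eval_high_eq b th1 th2 pc1 pc2 S1 mu1 e1 S2 mu2 e2 c1' c2' :
  eval th1 pc1 (ICfg S1 mu1 e1) c1' -> eval th2 pc2 (ICfg S2 mu2 e2) c2' ->
  ~~ lle pc1 A -> ~~ lle pc2 A -> store_eq A b S1 S2 -> heap_eq A b mu1 mu2 ->
  fcfg_eq A b c1' c2'.
Proof.
move=> ev1 ev2 hp1 hp2 hS hH.
move: (eval_high_confined ev1 hp1) (eval_pc_le ev1).
move: (eval_high_confined ev2 hp2) (eval_pc_le ev2).
case: c1' {ev1} => S1' mu1' v1; case: c2' {ev2} => S2' mu2' v2 /= [hS2 hH2] g2 [hS1 hH1] g1.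
split; first exact: store_eq_confined hS hS1 hS2.
split; first exact: heap_eq_confined hH hH1 hH2.
exact: veq_high_labels (high_le hp1 g1) (high_le hp2 g2).
Qed.

(** * Evaluation at a low program counter *)

Definition fcfg_eq_ext b c1 c2 := exists b', pbij b' /\ bsub b b' /\ fcfg_eq A b' c1 c2.

Lemma fcfg_eq_extI b c1 c2 : pbij b -> fcfg_eq A b c1 c2 -> fcfg_eq_ext b c1 c2.
Proof. by exists b; split=> //; split=> //; apply: bsub_refl. Qed.

Lemma fcfg_eq_ext_bind b c1 c2 d1 d2 : fcfg_eq_ext b c1 c2 ->
  (forall b', pbij b' -> bsub b b' -> fcfg_eq A b' c1 c2 -> fcfg_eq_ext b' d1 d2) ->
  fcfg_eq_ext b d1 d2.
Proof.
move=> [b1 [hb1 [hs1 h1]]] /(_ b1 hb1 hs1 h1) [b2 [hb2 [hs2 h2]]].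
by exists b2; split=> //; split=> //; apply: bsub_trans hs2.
Qed.

Lemma fcfg_eq_ext_val b S1 mu1 v1 S2 mu2 v2 w1 w2 :
  fcfg_eq_ext b (FCfg S1 mu1 v1) (FCfg S2 mu2 v2) ->
  (forall b', bsub b b' -> store_eq A b' S1 S2 -> heap_eq A b' mu1 mu2 ->
     veq A b' v1 v2 -> veq A b' w1 w2) ->
  fcfg_eq_ext b (FCfg S1 mu1 w1) (FCfg S2 mu2 w2).
Proof.
move=> h hw; apply: (fcfg_eq_ext_bind h) => b' hb' hs' [hS [hH hv]].
by apply: (fcfg_eq_extI hb'); split=> //; split=> //; apply: hw.
Qed.

Lemma fcfg_eq_ext_high b th1 th2 pc1 pc2 S1 mu1 e1 S2 mu2 e2 c1' c2' :
  pbij b -> store_eq A b S1 S2 -> heap_eq A b mu1 mu2 ->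
  eval th1 pc1 (ICfg S1 mu1 e1) c1' -> ~~ lle pc1 A ->
  ~~ lle pc2 A -> eval th2 pc2 (ICfg S2 mu2 e2) c2' -> fcfg_eq_ext b c1' c2'.
Proof. by move=> hb hS hH ev1 hp1 hp2 ev2; apply/(fcfg_eq_extI hb)/(eval_high_eq ev1 ev2). Qed.

Lemma fcfg_eq_ext_guard b g1 g2 l1 l2 th1 th2 pc1 pc2 S1 mu1 e1 S2 mu2 e2 c1' c2' :
  pbij b -> store_eq A b S1 S2 -> heap_eq A b mu1 mu2 ->
  veq A b (Val g1 l1) (Val g2 l2) ->
  eval th1 pc1 (ICfg S1 mu1 e1) c1' -> eval th2 pc2 (ICfg S2 mu2 e2) c2' ->
  (~~ lle l1 A -> ~~ lle pc1 A) -> (~~ lle l2 A -> ~~ lle pc2 A) ->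
  (lle l1 A -> l2 = l1 -> req A b g1 g2 -> fcfg_eq_ext b c1' c2') ->
  fcfg_eq_ext b c1' c2'.
Proof.
move=> hb hS hH /veq_Val_inv [[hl el hg] _ _ _ _ | [hl1 hl2] ev1 ev2 hp1 hp2 _].
  by apply.
exact: fcfg_eq_ext_high hb hS hH ev1 (hp1 hl1) (hp2 hl2) ev2.
Qed.

Definition ni th1 pc c1 c1' : Prop :=
  let: ICfg S1 mu1 e := c1 in
  lle pc A -> forall b th2 S2 mu2 c2', pbij b ->
  store_eq A b S1 S2 -> heap_eq A b mu1 mu2 -> eeq A b th1 th2 ->
  eval th2 pc (ICfg S2 mu2 e) c2' -> fcfg_eq_ext b c1' c2'.

Lemma ni_app th pc St mu e1 e2 S1 mu1 e th' l S2 mu2 v2 S3 mu3 v :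
  ni th pc (ICfg St mu e1) (FCfg S1 mu1 (Val (RClos e th') l)) ->
  ni th pc (ICfg S1 mu1 e2) (FCfg S2 mu2 v2) ->
  eval (v2 :: th') (ljoin pc l) (ICfg S2 mu2 e) (FCfg S3 mu3 v) ->
  ni (v2 :: th') (ljoin pc l) (ICfg S2 mu2 e) (FCfg S3 mu3 v) ->
  ni th pc (ICfg St mu (EApp e1 e2)) (FCfg S3 mu3 v).
Proof.
move=> IH1 IH2 ev3 IH3 hpc b th2 S2' mu2' c2' hb hS hH he ev2; inversion ev2; subst.
apply: (fcfg_eq_ext_bind (IH1 hpc b th2 _ _ _ hb hS hH he ltac:(eassumption))).
move=> b1 hb1 hs1 [hS1 [hH1 hf]].
apply: (fcfg_eq_ext_bind
  (IH2 hpc b1 th2 _ _ _ hb1 hS1 hH1 (eeq_bsub hs1 he) ltac:(eassumption))).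
move=> b2 hb2 hs2 [hS2 [hH2 hv2]].
apply: (fcfg_eq_ext_guard hb2 hS2 hH2 (veq_bsub hs2 hf) ev3 ltac:(eassumption));
  [exact: high_joinr | exact: high_joinr | move=> hl el /req_clos_inv [ee hth]; subst].
have hpcl : lle (ljoin pc l) A by rewrite lle_join hpc hl.
exact: (IH3 hpcl b2 _ _ _ _ hb2 hS2 hH2 (eeq_cons hv2 hth) ltac:(eassumption)).
Qed.

Lemma ni_case_inl th pc St mu e e1 e2 S1 mu1 v1 l S2 mu2 v :
  ni th pc (ICfg St mu e) (FCfg S1 mu1 (Val (RInl v1) l)) ->
  eval (v1 :: th) (ljoin pc l) (ICfg S1 mu1 e1) (FCfg S2 mu2 v) ->
  ni (v1 :: th) (ljoin pc l) (ICfg S1 mu1 e1) (FCfg S2 mu2 v) ->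
  ni th pc (ICfg St mu (ECase e e1 e2)) (FCfg S2 mu2 v).
Proof.
move=> IH1 ev1 IH2 hpc b th2 S2' mu2' c2' hb hS hH he ev2; inversion ev2; subst;
  apply: (fcfg_eq_ext_bind (IH1 hpc b th2 _ _ _ hb hS hH he ltac:(eassumption)));
  move=> b1 hb1 hs1 [hS1 [hH1 hg]];
  apply: (fcfg_eq_ext_guard hb1 hS1 hH1 hg ev1 ltac:(eassumption));
  try exact: high_joinr; move=> hl el hr; subst; try by inversion hr.
have hpcl : lle (ljoin pc l) A by rewrite lle_join hpc hl.
apply: (IH2 hpcl b1 _ _ _ _ hb1 hS1 hH1 _ ltac:(eassumption)).
exact/eeq_cons/(eeq_bsub hs1 he)/req_inl_inv.
Qed.

Lemma ni_case_inr th pc St mu e e1 e2 S1 mu1 v1 l S2 mu2 v :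
  ni th pc (ICfg St mu e) (FCfg S1 mu1 (Val (RInr v1) l)) ->
  eval (v1 :: th) (ljoin pc l) (ICfg S1 mu1 e2) (FCfg S2 mu2 v) ->
  ni (v1 :: th) (ljoin pc l) (ICfg S1 mu1 e2) (FCfg S2 mu2 v) ->
  ni th pc (ICfg St mu (ECase e e1 e2)) (FCfg S2 mu2 v).
Proof.
move=> IH1 ev1 IH2 hpc b th2 S2' mu2' c2' hb hS hH he ev2; inversion ev2; subst;
  apply: (fcfg_eq_ext_bind (IH1 hpc b th2 _ _ _ hb hS hH he ltac:(eassumption)));
  move=> b1 hb1 hs1 [hS1 [hH1 hg]];
  apply: (fcfg_eq_ext_guard hb1 hS1 hH1 hg ev1 ltac:(eassumption));
  try exact: high_joinr; move=> hl el hr; subst; try by inversion hr.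
have hpcl : lle (ljoin pc l) A by rewrite lle_join hpc hl.
apply: (IH2 hpcl b1 _ _ _ _ hb1 hS1 hH1 _ ltac:(eassumption)).
exact/eeq_cons/(eeq_bsub hs1 he)/req_inr_inv.
Qed.

Lemma ni_pair th pc St mu e1 e2 S1 mu1 v1 S2 mu2 v2 :
  ni th pc (ICfg St mu e1) (FCfg S1 mu1 v1) ->
  ni th pc (ICfg S1 mu1 e2) (FCfg S2 mu2 v2) ->
  ni th pc (ICfg St mu (EPair e1 e2)) (FCfg S2 mu2 (Val (RPair v1 v2) pc)).
Proof.
move=> IH1 IH2 hpc b th2 S2' mu2' c2' hb hS hH he ev2; inversion ev2; subst.
apply: (fcfg_eq_ext_bind (IH1 hpc b th2 _ _ _ hb hS hH he ltac:(eassumption))).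
move=> b1 hb1 hs1 [hS1 [hH1 hv1]].
apply: (fcfg_eq_ext_val
  (IH2 hpc b1 th2 _ _ _ hb1 hS1 hH1 (eeq_bsub hs1 he) ltac:(eassumption))).
by move=> b2 hs2 _ _ hv2; apply/veq_req/req_pair/hv2/(veq_bsub hs2 hv1).
Qed.

Lemma ni_compare th pc St mu e1 e2 S1 mu1 l1 l1' S2 mu2 l2 l2' :
  ni th pc (ICfg St mu e1) (FCfg S1 mu1 (Val (RLabel l1) l1')) ->
  ni th pc (ICfg S1 mu1 e2) (FCfg S2 mu2 (Val (RLabel l2) l2')) ->
  ni th pc (ICfg St mu (ECompare e1 e2))
    (FCfg S2 mu2 (Val (if lle l1 l2 then RInl (Val (RUnit L) pc)
                       else RInr (Val (RUnit L) pc)) (ljoin l1' l2'))).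
Proof.
move=> IH1 IH2 hpc b th2 S2' mu2' c2' hb hS hH he ev2; inversion ev2; subst.
apply: (fcfg_eq_ext_bind (IH1 hpc b th2 _ _ _ hb hS hH he ltac:(eassumption))).
move=> b1 hb1 hs1 [hS1 [hH1 hv1]].
apply: (fcfg_eq_ext_val
  (IH2 hpc b1 th2 _ _ _ hb1 hS1 hH1 (eeq_bsub hs1 he) ltac:(eassumption))).
by move=> b2 hs2 _ _ hv2; apply: veq_compare (veq_bsub hs2 hv1) hv2.
Qed.

Lemma ni_taint th pc St mu e1 e2 S1 mu1 l l' S2 mu2 v :
  ni th pc (ICfg St mu e1) (FCfg S1 mu1 (Val (RLabel l) l')) -> lle l' l ->
  eval th l (ICfg S1 mu1 e2) (FCfg S2 mu2 v) ->
  ni th l (ICfg S1 mu1 e2) (FCfg S2 mu2 v) ->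
  ni th pc (ICfg St mu (ETaint e1 e2)) (FCfg S2 mu2 v).
Proof.
move=> IH1 hl' ev1 IH2 hpc b th2 S2' mu2' c2' hb hS hH he ev2; inversion ev2; subst.
apply: (fcfg_eq_ext_bind (IH1 hpc b th2 _ _ _ hb hS hH he ltac:(eassumption))).
move=> b1 hb1 hs1 [hS1 [hH1 hg]].
apply: (fcfg_eq_ext_guard hb1 hS1 hH1 hg ev1 ltac:(eassumption));
  [by move/high_le; apply | by move/high_le; apply | move=> _ el /req_label_inv el'; subst].
have [hl | hl] := boolP (lle l A).
  exact: (IH2 hl b1 _ _ _ _ hb1 hS1 hH1 (eeq_bsub hs1 he) ltac:(eassumption)).
exact: (fcfg_eq_ext_high hb1 hS1 hH1 ev1 hl hl ltac:(eassumption)).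
Qed.

Lemma ni_write th pc St mu e1 e2 S1 mu1 n l l1 S2 mu2 r l2 :
  ni th pc (ICfg St mu e1) (FCfg S1 mu1 (Val (RRefI n l) l1)) -> lle l1 l ->
  ni th pc (ICfg S1 mu1 e2) (FCfg S2 mu2 (Val r l2)) -> lle l2 l ->
  n <= size (S2 l) ->
  ni th pc (ICfg St mu (EWrite TagI e1 e2))
    (FCfg (store_upd S2 l (lupd (RUnit L) (S2 l) n r)) mu2 (Val (RUnit L) pc)).
Proof.
move=> IH1 hl1 IH2 hl2 hn hpc b th2 S2' mu2' c2' hb hS hH he ev2; inversion ev2; subst.
apply: (fcfg_eq_ext_bind (IH1 hpc b th2 _ _ _ hb hS hH he ltac:(eassumption))).
move=> b1 hb1 hs1 [hS1 [hH1 href]].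
apply: (fcfg_eq_ext_bind
  (IH2 hpc b1 th2 _ _ _ hb1 hS1 hH1 (eeq_bsub hs1 he) ltac:(eassumption))).
move=> b2 hb2 hs2 [hS2 [hH2 hv]].
apply: (fcfg_eq_extI hb2); split; last by split=> //; apply/veq_req/req_unit.
by apply: (store_eq_write hS2 (veq_bsub hs2 href) hl1 _ hv hl2); eassumption.
Qed.

Lemma ni_new_fs th pc St mu e S1 mu1 v :
  ni th pc (ICfg St mu e) (FCfg S1 mu1 v) ->
  ni th pc (ICfg St mu (ENew TagS e))
    (FCfg S1 (lupd v mu1 (size mu1) v) (Val (RAddr L (size mu1)) pc)).
Proof.
move=> IH hpc b th2 S2 mu2 c2' hb hS hH he ev2; inversion ev2; subst.
apply: (fcfg_eq_ext_bind (IH hpc b th2 _ _ _ hb hS hH he ltac:(eassumption))).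
move=> b1 hb1 _ [hS1 [hH1 hv]].
exists (bext b1 (size mu1) (size mu3)).
split; first exact: pbij_bext.
split; first exact: bsub_bext.
split; first exact: store_eq_bsub (bsub_bext hH1) hS1.
split; first exact: heap_eq_alloc.
by apply/veq_req/req_addr; rewrite /bext eqxx.
Qed.

Lemma ni_write_fs th pc St mu e1 e2 S1 mu1 n l S2 mu2 r2 l2 r1 l1 :
  ni th pc (ICfg St mu e1) (FCfg S1 mu1 (Val (RAddr L n) l)) ->
  ni th pc (ICfg S1 mu1 e2) (FCfg S2 mu2 (Val r2 l2)) ->
  nth_error mu2 n = Some (Val r1 l1) -> lle l l1 ->
  ni th pc (ICfg St mu (EWrite TagS e1 e2))
    (FCfg S2 (lupd (Val r2 l2) mu2 n (Val r2 (ljoin l2 l))) (Val (RUnit L) pc)).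
Proof.
move=> IH1 IH2 hn hl hpc b th2 S2' mu2' c2' hb hS hH he ev2; inversion ev2; subst.
apply: (fcfg_eq_ext_bind (IH1 hpc b th2 _ _ _ hb hS hH he ltac:(eassumption))).
move=> b1 hb1 hs1 [hS1 [hH1 haddr]].
apply: (fcfg_eq_ext_bind
  (IH2 hpc b1 th2 _ _ _ hb1 hS1 hH1 (eeq_bsub hs1 he) ltac:(eassumption))).
move=> b2 hb2 hs2 [hS2 [hH2 hv]].
apply: (fcfg_eq_extI hb2); split=> //; split; last exact/veq_req/req_unit.
exact: (heap_eq_write _ _ hb2 hH2 (veq_bsub hs2 haddr) hn hl
  ltac:(eassumption) ltac:(eassumption) hv).
Qed.

Lemma ni_new th pc St mu e S1 mu1 r l :
  ni th pc (ICfg St mu e) (FCfg S1 mu1 (Val r l)) ->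
  ni th pc (ICfg St mu (ENew TagI e))
    (FCfg (store_upd S1 l (lupd (RUnit L) (S1 l) (size (S1 l)) r)) mu1
          (Val (RRefI (size (S1 l)) l) pc)).
Proof.
move=> IH hpc b th2 S2 mu2 c2' hb hS hH he ev2; inversion ev2; subst.
apply: (fcfg_eq_ext_bind (IH hpc b th2 _ _ _ hb hS hH he ltac:(eassumption))).
move=> b1 hb1 _ [hS1 [hH1 /(store_eq_alloc hS1) [hS' href]]].
by apply: (fcfg_eq_extI hb1); split=> //; split=> //; apply: veq_req.
Qed.

Lemma ni_read th pc St mu e S1 mu1 n l l' r :
  ni th pc (ICfg St mu e) (FCfg S1 mu1 (Val (RRefI n l) l')) ->
  nth_error (S1 l) n = Some r ->
  ni th pc (ICfg St mu (ERead TagI e)) (FCfg S1 mu1 (Val r (ljoin l l'))).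
Proof.
move=> IH hr hpc b th2 S2 mu2 c2' hb hS hH he ev2; inversion ev2; subst.
apply: (fcfg_eq_ext_val (IH hpc b th2 _ _ _ hb hS hH he ltac:(eassumption))).
move=> b' _ hS' _ hv; apply: (veq_vjoin_guard (w1 := Val _ _) (w2 := Val _ _) hv) => _ href.
by apply: (store_eq_nth hS' href hr); eassumption.
Qed.

Lemma ni_labelOfRef th pc St mu e S1 mu1 n l l' :
  ni th pc (ICfg St mu e) (FCfg S1 mu1 (Val (RRefI n l) l')) ->
  ni th pc (ICfg St mu (ELabelOfRef TagI e))
    (FCfg S1 mu1 (Val (RLabel l) (ljoin l l'))).
Proof.
move=> IH hpc b th2 S2 mu2 c2' hb hS hH he ev2; inversion ev2; subst.
apply: (fcfg_eq_ext_val (IH hpc b th2 _ _ _ hb hS hH he ltac:(eassumption))).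
move=> b' _ _ _ hv; apply: (veq_vjoin_guard (w1 := Val _ _) (w2 := Val _ _) hv) => _.
exact: veq_labelOfRef.
Qed.

Lemma ni_read_fs th pc St mu e S1 mu1 n l r l' :
  ni th pc (ICfg St mu e) (FCfg S1 mu1 (Val (RAddr L n) l)) ->
  nth_error mu1 n = Some (Val r l') ->
  ni th pc (ICfg St mu (ERead TagS e)) (FCfg S1 mu1 (Val r (ljoin l l'))).
Proof.
move=> IH hn hpc b th2 S2 mu2 c2' hb hS hH he ev2; inversion ev2; subst.
apply: (fcfg_eq_ext_val (IH hpc b th2 _ _ _ hb hS hH he ltac:(eassumption))).
move=> b' _ _ hH' hv; apply: (veq_joinl_guard hv) => _ /req_addr_inv hb'.
by apply: (heap_eq_nth hH' hb' hn); eassumption.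
Qed.

Lemma ni_labelOfRef_fs th pc St mu e S1 mu1 n l1 r l2 :
  ni th pc (ICfg St mu e) (FCfg S1 mu1 (Val (RAddr L n) l1)) ->
  nth_error mu1 n = Some (Val r l2) ->
  ni th pc (ICfg St mu (ELabelOfRef TagS e))
    (FCfg S1 mu1 (Val (RLabel l2) (ljoin l1 l2))).
Proof.
move=> IH hn hpc b th2 S2 mu2 c2' hb hS hH he ev2; inversion ev2; subst.
apply: (fcfg_eq_ext_val (IH hpc b th2 _ _ _ hb hS hH he ltac:(eassumption))).
move=> b' _ _ hH' hv; apply: (veq_joinl_guard hv) => _ /req_addr_inv hb'.
by apply: veq_labelOf (heap_eq_nth hH' hb' hn _); eassumption.
Qed.

Lemma eval_low_ni th pc c c' : eval th pc c c' -> ni th pc c c'.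
Proof.
elim=> {th pc c c'}.
- move=> > hx hpc b th2 S2 mu2 c2' hb hS hH he ev2; inversion ev2; subst.
  apply: (fcfg_eq_extI hb); split=> //; split=> //.
  by apply/veq_vjoin/(eeq_nth he hx); eassumption.
- move=> > hpc b th2 S2 mu2 c2' hb hS hH he ev2; inversion ev2; subst.
  by apply: (fcfg_eq_extI hb); split=> //; split=> //; apply/veq_req/req_unit.
- move=> > hpc b th2 S2 mu2 c2' hb hS hH he ev2; inversion ev2; subst.
  by apply: (fcfg_eq_extI hb); split=> //; split=> //; apply/veq_req/req_label.
- move=> > hpc b th2 S2 mu2 c2' hb hS hH he ev2; inversion ev2; subst.
  by apply: (fcfg_eq_extI hb); split=> //; split=> //; apply/veq_req/req_clos.
- move=> > hpc b th2 S2 mu2 c2' hb hS hH he ev2; inversion ev2; subst.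
  by apply: (fcfg_eq_extI hb); split=> //; split=> //; apply/veq_req/req_label.
- move=> > _ IH1 _ IH2; exact: ni_app IH1 IH2.
- move=> > _ IH hpc b th2 S2 mu2 c2' hb hS hH he ev2; inversion ev2; subst.
  apply: (fcfg_eq_ext_val (IH hpc b th2 _ _ _ hb hS hH he ltac:(eassumption))).
  by move=> b' _ _ _ hv; apply/veq_req/req_inl.
- move=> > _ IH hpc b th2 S2 mu2 c2' hb hS hH he ev2; inversion ev2; subst.
  apply: (fcfg_eq_ext_val (IH hpc b th2 _ _ _ hb hS hH he ltac:(eassumption))).
  by move=> b' _ _ _ hv; apply/veq_req/req_inr.
- move=> > _ IH; exact: ni_case_inl IH.
- move=> > _ IH; exact: ni_case_inr IH.
- move=> > _ IH1 _ IH2; exact: ni_pair IH1 IH2.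
- move=> > _ IH hpc b th2 S2 mu2 c2' hb hS hH he ev2; inversion ev2; subst.
  apply: (fcfg_eq_ext_val (IH hpc b th2 _ _ _ hb hS hH he ltac:(eassumption))).
  by move=> b' _ _ _ hv; apply: (veq_vjoin_guard hv) => _ /req_pair_inv [].
- move=> > _ IH hpc b th2 S2 mu2 c2' hb hS hH he ev2; inversion ev2; subst.
  apply: (fcfg_eq_ext_val (IH hpc b th2 _ _ _ hb hS hH he ltac:(eassumption))).
  by move=> b' _ _ _ hv; apply: (veq_vjoin_guard hv) => _ /req_pair_inv [].
- move=> > _ IH hpc b th2 S2 mu2 c2' hb hS hH he ev2; inversion ev2; subst.
  apply: (fcfg_eq_ext_val (IH hpc b th2 _ _ _ hb hS hH he ltac:(eassumption))).
  by move=> b' _ _ _; apply: veq_labelOf.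
- move=> > _ IH1 _ IH2; exact: ni_compare IH1 IH2.
- move=> > _ IH; exact: ni_taint IH.
- move=> > _ IH; exact: ni_new IH.
- move=> > _ IH; exact: ni_read IH.
- move=> > _ IH1 hl1 _ IH2; exact: ni_write IH1 hl1 IH2.
- move=> > _ IH; exact: ni_labelOfRef IH.
- move=> > _ IH; exact: ni_new_fs IH.
- move=> > _ IH; exact: ni_read_fs IH.
- move=> > _ IH; exact: ni_labelOfRef_fs IH.
- move=> > _ IH1 _ IH2; exact: ni_write_fs IH1 IH2.
Qed.

End NonInterference.
Theorem mainTheorem3 (disp : Order.disp_t) (L : latticeType disp) (A : L)
  (pc : L) (b : nat -> option nat) (c1 c2 : icfg L) (th1 th2 : env L)
  (c1' c2' : fcfg L) :
  pbij b ->
  cfg_valid c1 th1 -> cfg_valid c2 th2 ->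
  icfg_eq A b c1 c2 -> eeq A b th1 th2 ->
  eval th1 pc c1 c1' -> eval th2 pc c2 c2' ->
  exists b', pbij b' /\ bsub b b' /\ fcfg_eq A b' c1' c2'.
Proof.
move=> hb _ _ hc he ev1 ev2.
case: c1 hc ev1 => S1 mu1 e; case: c2 ev2 => S2 mu2 e2 ev2 [hS [hH ee]] ev1; subst e2.
have [hpc | hpc] := boolP (lle pc A).
  exact: (eval_low_ni A ev1 hpc _ _ _ _ _ hb hS hH he ev2).
exact: (fcfg_eq_ext_high hb hS hH ev1 hpc hpc ev2).
Qed.
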